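(* For every $k\ge2$, $\mathcal A_k\subseteq\mathcal A_{k+1}$ and $\mathcal A_k\subseteq\mathcal A$; that is, $(\mathcal A_k)_k$ is a nested sequence of subsets of $\mathcal A$.
   Context: $d\ge2$; $\mathcal S_{d-1}=\{(w_1,\dots,w_{d-1})\in[0,1]^{d-1}:\sum w_i\le1\}$, $w_d=1-\sum_{i<d}w_i$. $\mathcal A$ is the family of convex functions $A:\mathcal S_{d-1}\to[1/d,1]$ with $\max(w_1,\dots,w_d)\le A({\boldsymbol w})\le1$ for all ${\boldsymbol w}$. $\Gamma_k$ is the set of ${\boldsymbol\alpha}\in\{0,\dots,k\}^{d-1}$ with $\sum\alpha_i\le k$, $\alpha_d=k-\sum_{i<d}\alpha_i$, and $b_{\boldsymbol\alpha}({\boldsymbol w};k)=\frac{k!}{\alpha_1!\cdots\alpha_d!}\prod_{i=1}^dw_i^{\alpha_i}$. Let ${\boldsymbol v}_0={\bf 0}$, ${\boldsymbol v}_r={\boldsymbol e}_r\in\mathbb R^{d-1}$. For coefficients $(\beta_{\boldsymbol\alpha})_{{\boldsymbol\alpha}\in\Gamma_k}$ define $\Delta_{s,r}\beta_{\boldsymbol\alpha}=\beta_{{\boldsymbol\alpha}+{\boldsymbol v}_s}-\beta_{{\boldsymbol\alpha}+{\boldsymbol v}_r}$ and $\Delta_{t,r}\Delta_{s,r}\beta_{\boldsymbol\alpha}=\Delta_{s,r}\beta_{{\boldsymbol\alpha}+{\boldsymbol v}_t}-\Delta_{s,r}\beta_{{\boldsymbol\alpha}+{\boldsymbol v}_r}$.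 $\mathcal A_k$ is the set of functions ${\boldsymbol w}\mapsto\sum_{{\boldsymbol\alpha}\in\Gamma_k}\beta_{\boldsymbol\alpha}b_{\boldsymbol\alpha}({\boldsymbol w};k)$ with all $\beta_{\boldsymbol\alpha}\in[0,1]$ satisfying: (R1) for all ${\boldsymbol\alpha}\in\Gamma_{k-2}$ and $i\in\{1,\dots,d-1\}$: $\Delta^2_{i,0}\beta_{\boldsymbol\alpha}-\sum_{j\in\{1,\dots,d-1\},j\ne i}|\Delta_{i,0}\Delta_{j,0}\beta_{\boldsymbol\alpha}|\ge0$; (R2) $\beta_{\boldsymbol\alpha}=1$ for ${\boldsymbol\alpha}={\bf 0}$ and for ${\boldsymbol\alpha}=k{\boldsymbol e}_i$, $i=1,\dots,d-1$; (R3) $\beta_{\boldsymbol\alpha}\ge1-1/k$ for ${\boldsymbol\alpha}={\boldsymbol e}_i$, ${\boldsymbol\alpha}=(k-1){\boldsymbol e}_i$, and ${\boldsymbol\alpha}=(k-1){\boldsymbol e}_i+{\boldsymbol e}_j$, for all $i\ne j$ in $\{1,\dots,d-1\}$. *)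

(* Points of the simplex S_{d-1} are row vectors in
   'rV[R]_(d.-1); multi-indices are nat-valued finite functions on 'I_(d.-1). *)
From HB Require Import structures.
From mathcomp Require Import all_boot all_order all_algebra.
Set Implicit Arguments. Unset Strict Implicit. Unset Printing Implicit Defensive.
Import Order.TTheory GRing.Theory Num.Theory.
Local Open Scope ring_scope.

Section Defs.
Variable R : realFieldType.
Variable d : nat.
Local Notation n := d.-1.

Definition midx := {ffun 'I_n -> nat}.

Definition msum (a : midx) : nat := (\sum_(i < n) a i)%N.
Definition inGamma (m : nat) (a : midx) : bool := (msum a <= m)%N.

(* alpha + v_r, with v_0 = 0 and v_r = e_r for r = 1..d-1 *)
Definition addv (r : nat) (a : midx) : midx :=
  [ffun i : 'I_n => (a i + ((r == (nat_of_ord i).+1) : nat))%N].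

Definition mzero : midx := [ffun _ => 0%N].
Definition mscale (c : nat) (r : 'I_n) : midx :=
  [ffun i => if i == r then c else 0%N].
Definition mpair (c : nat) (r : 'I_n) (c' : nat) (s : 'I_n) : midx :=
  [ffun i => (if i == r then c else 0%N) + (if i == s then c' else 0%N)]%N.

Definition wlast (w : 'rV[R]_n) : R := 1 - \sum_(i < n) w 0 i.

Definition simplex (w : 'rV[R]_n) : Prop :=
  (forall i, 0 <= w 0 i) /\ \sum_(i < n) w 0 i <= 1.

Definition bern (k : nat) (a : midx) (w : 'rV[R]_n) : R :=
  (k`!)%:R / ((\prod_(i < n) (a i)`! * (k - msum a)`!)%N)%:R
  * (\prod_(i < n) w 0 i ^+ a i) * wlast w ^+ (k - msum a).

Definition bpoly (k : nat) (beta : midx -> R) (w : 'rV[R]_n) : R :=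
  \sum_(a : {ffun 'I_n -> 'I_k.+1} | inGamma k [ffun i => nat_of_ord (a i)])
     beta [ffun i => nat_of_ord (a i)] * bern k [ffun i => nat_of_ord (a i)] w.

Definition D1 (beta : midx -> R) (s r : nat) (a : midx) : R :=
  beta (addv s a) - beta (addv r a).
Definition D2 (beta : midx -> R) (t s r : nat) (a : midx) : R :=
  D1 beta s r (addv t a) - D1 beta s r (addv r a).

Definition admissible (k : nat) (beta : midx -> R) : Prop :=
  (forall a, inGamma k a -> 0 <= beta a <= 1) /\
  (* (R1) *)
  (forall a : midx, inGamma (k - 2) a -> forall i : 'I_n,
     D2 beta i.+1 i.+1 0 a
     - \sum_(j < n | j != i) `| D2 beta i.+1 j.+1 0 a | >= 0) /\
  (* (R2) *)
  beta mzero = 1 /\ (forall i : 'I_n, beta (mscale k i) = 1) /\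
  (* (R3) *)
  (forall i : 'I_n, beta (mscale 1 i) >= 1 - k%:R^-1) /\
  (forall i : 'I_n, beta (mscale k.-1 i) >= 1 - k%:R^-1) /\
  (forall i j : 'I_n, i != j -> beta (mpair k.-1 i 1 j) >= 1 - k%:R^-1).

Definition inAk (k : nat) (f : 'rV[R]_n -> R) : Prop :=
  exists beta : midx -> R, admissible k beta /\
    forall w, simplex w -> f w = bpoly k beta w.

Definition convex_on_simplex (f : 'rV[R]_n -> R) : Prop :=
  forall u v, simplex u -> simplex v -> forall t : R, 0 <= t <= 1 ->
    f (t *: u + (1 - t) *: v) <= t * f u + (1 - t) * f v.

Definition inA (f : 'rV[R]_n -> R) : Prop :=
  convex_on_simplex f /\
  forall w, simplex w ->
    [/\ (d%:R)^-1 <= f w <= 1,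
        (forall i : 'I_n, w 0 i <= f w) & wlast w <= f w].

End Defs.

(* Write f = sum_a beta_a b_a(.; k) through its blossom B(w_1, ..., w_k), which
   is symmetric and affine in each argument, with f(w) = B(w, ..., w).  Along a
   segment [v, u] the sequence c_j = B(u^j, v^(k-j)) has second differences
   B(..., sum_ij (u_i - v_i)(u_j - v_j) Delta_i0 Delta_j0 beta), which are
   nonnegative because (R1) makes the matrix of second differences diagonally
   dominant.  Convexity of c in j gives convexity of f, after replacing the copies
   of t u + (1 - t) v by u and v one at a time.  Taking v a vertex of the simplex,
   the tangent inequality c_k >= c_0 + k (c_1 - c_0) together with (R2), (R3)
   yields w_i <= f(w) for i = 1, ..., d; hence 1/d <= f(w) as these w_i sum to 1,
   and f <= 1 since beta <= 1.  Finally degree elevation expresses f in degree k + 1 with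
   coefficients that are averages of the beta_a, and whose second differences are
   averages of those of beta, so (R1)-(R3) survive. *)
From Pilot Require Import Defs.
From HB Require Import structures.
From mathcomp Require Import all_boot all_order all_algebra.
From mathcomp Require Import ring lra zify.
Set Implicit Arguments. Unset Strict Implicit. Unset Printing Implicit Defensive.
Import Order.TTheory GRing.Theory Num.Theory.
Local Open Scope ring_scope.

Section BernsteinOnSimplex.
Variable R : realFieldType.
Variable d : nat.
Local Notation n := d.-1.
Local Notation mi := (midx d).
Local Notation rv := 'rV[R]_n.
Local Notation addv := (@Defs.addv d).
Local Notation msum := (@Defs.msum d).
Local Notation wlast := (@Defs.wlast R d).
Local Notation simplex := (@Defs.simplex R d).

(** * Multi-indices *)

(* Truncated: [subv i a] is [a] when [a i = 0]. *)
Definition subv (i : 'I_n) (a : mi) : mi := [ffun l => (a l - (l == i))%N].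

Lemma addv0 (a : mi) : addv 0 a = a.
Proof. by apply/ffunP=> l; rewrite ffunE addn0. Qed.

Lemma addvE (i : 'I_n) (a : mi) l : addv i.+1 a l = (a l + (l == i))%N.
Proof. by rewrite ffunE eqSS eq_sym. Qed.

Lemma addvC x y (a : mi) : addv x (addv y a) = addv y (addv x a).
Proof. by apply/ffunP=> l; rewrite !ffunE addnAC. Qed.

Lemma msum_addv (i : 'I_n) (a : mi) : msum (addv i.+1 a) = (msum a).+1.
Proof.
rewrite /msum (eq_bigr (fun l => a l + (l == i))%N); last by move=> l _; rewrite addvE.
rewrite big_split /= [X in (_ + X)%N](bigD1 i) //= eqxx.
by rewrite [X in (_ + (_ + X))%N]big1 ?addn0 ?addn1 // => l /negbTE->.
Qed.

Lemma addvK (i : 'I_n) (a : mi) : subv i (addv i.+1 a) = a.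
Proof. by apply/ffunP=> l; rewrite ffunE addvE addnK. Qed.

Lemma subvK (i : 'I_n) (a : mi) : (0 < a i)%N -> addv i.+1 (subv i a) = a.
Proof.
move=> a_gt0; apply/ffunP=> l; rewrite addvE ffunE.
by have [->|ne] := eqVneq l i => /=; lia.
Qed.

Lemma msum_subv (i : 'I_n) (a : mi) : (0 < a i)%N -> msum (subv i a) = (msum a).-1.
Proof. by move=> a_gt0; rewrite -{2}(subvK a_gt0) msum_addv. Qed.

Lemma subv_addvC (i l : 'I_n) (a : mi) :
  l != i -> subv l (addv i.+1 a) = addv i.+1 (subv l a).
Proof.
move=> ne; apply/ffunP=> j; rewrite [LHS]ffunE addvE [RHS]addvE ffunE.
by have [->|nj] := eqVneq j l; rewrite ?(negbTE ne) /=; lia.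
Qed.

Lemma leq_msum (a : mi) (i : 'I_n) : (a i <= msum a)%N.
Proof. by rewrite /msum (bigD1 i) //= leq_addr. Qed.

Lemma msum_mzero : msum (mzero d) = 0%N.
Proof. by rewrite /msum big1 // => l _; rewrite ffunE. Qed.

Lemma inGamma_addv0 m (a : mi) : inGamma m a -> inGamma m.+1 (addv 0 a).
Proof. by rewrite addv0 /inGamma => h; apply: leqW. Qed.

Lemma inGamma_addvS m (i : 'I_n) (a : mi) : inGamma m a -> inGamma m.+1 (addv i.+1 a).
Proof. by rewrite /inGamma msum_addv. Qed.

(** * Barycentric averages and the blossom *)

(* [bary w F] averages [F] over the vertices [0, e_1, ..., e_(d-1)] of the
   simplex with the barycentric coordinates [w_d, w_1, ..., w_(d-1)] of [w]. *)
Definition bary (w : rv) (F : nat -> R) : R :=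
  wlast w * F 0%N + \sum_(i < n) w 0 i * F i.+1.

Definition bcoord (w : rv) (x : 'I_n.+1) : R :=
  if unlift ord0 x is Some i then w 0 i else wlast w.

Lemma baryE w F : bary w F = \sum_(x < n.+1) bcoord w x * F x.
Proof.
rewrite big_ord_recl /bcoord /= unlift_none; congr (_ + _).
by apply: eq_bigr => i _; rewrite liftK.
Qed.

Lemma sum_bcoord w : \sum_(x < n.+1) bcoord w x = 1.
Proof.
rewrite big_ord_recl /bcoord unlift_none (eq_bigr (fun i => w 0 i)).
  by rewrite /wlast subrK.
by move=> i _; rewrite liftK.
Qed.

Lemma inv_dim_le (w : rv) F : (0 < d)%N ->
  wlast w <= F -> (forall i, w 0 i <= F) -> d%:R^-1 <= F.
Proof.
move=> d_gt0 wlast_le coord_le.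
have : \sum_(x < n.+1) bcoord w x <= \sum_(x < n.+1) F.
  by apply: ler_sum => x _; rewrite /bcoord; case: (unlift ord0 x).
rewrite sum_bcoord sumr_const card_ord prednK // => le_dF.
have d_pos : 0 < d%:R :> R by rewrite ltr0n.
by rewrite -(ler_pM2l d_pos) mulfV ?gt_eqF // mulr_natl.
Qed.

Lemma eq_bary w F G : F 0%N = G 0%N -> (forall i : 'I_n, F i.+1 = G i.+1) ->
  bary w F = bary w G.
Proof. by move=> eq0 eqS; rewrite /bary eq0; congr (_ + _); apply: eq_bigr => i _; rewrite eqS. Qed.

Lemma bary_cst w c : bary w (fun _ => c) = c.
Proof. by rewrite baryE -big_distrl /= sum_bcoord mul1r. Qed.

Lemma baryD w F G : bary w (fun x => F x + G x) = bary w F + bary w G.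
Proof. by rewrite !baryE -big_split /=; apply: eq_bigr => x _; rewrite mulrDr. Qed.

Lemma baryZ w c F : bary w (fun x => c * F x) = c * bary w F.
Proof. by rewrite !baryE mulr_sumr; apply: eq_bigr => x _; rewrite mulrCA. Qed.

Lemma baryB w F G : bary w (fun x => F x - G x) = bary w F - bary w G.
Proof. by rewrite !baryE -sumrB; apply: eq_bigr => x _; rewrite mulrBr. Qed.

Lemma bary_swap x y (G : nat -> nat -> R) :
  bary y (fun p => bary x (G p)) = bary x (fun q => bary y (G^~ q)).
Proof.
rewrite baryE (eq_bigr (fun p => \sum_(q < n.+1) bcoord y p * (bcoord x q * G p q))).
  rewrite exchange_big baryE; apply: eq_bigr => q _; rewrite baryE mulr_sumr.
  by apply: eq_bigr => p _; rewrite mulrCA.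
by move=> p _; rewrite baryE mulr_sumr.
Qed.

Lemma bary_affine w F : bary w F = F 0%N + \sum_(i < n) w 0 i * (F i.+1 - F 0%N).
Proof.
rewrite /bary /wlast mulrBl mul1r mulr_suml.
under [X in _ = _ + X]eq_bigr do rewrite mulrBr.
by rewrite sumrB; ring.
Qed.

Lemma bary_convex_comb (u v : rv) t F :
  bary (t *: u + (1 - t) *: v) F = t * bary u F + (1 - t) * bary v F.
Proof.
rewrite !bary_affine.
rewrite (eq_bigr (fun i => t * (u 0 i * (F i.+1 - F 0%N)) + (1 - t) * (v 0 i * (F i.+1 - F 0%N)))).
  by rewrite big_split /= -!mulr_sumr; ring.
by move=> i _; rewrite !mxE; ring.
Qed.

Lemma wlast_ge0 (w : rv) : simplex w -> 0 <= wlast w.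
Proof. by case=> _ h; rewrite /wlast subr_ge0. Qed.

Lemma bary_ge0 (w : rv) F : simplex w ->
  0 <= F 0%N -> (forall i : 'I_n, 0 <= F i.+1) -> 0 <= bary w F.
Proof.
move=> hw F0 FS; rewrite /bary addr_ge0 ?mulr_ge0 ?wlast_ge0 //.
by apply: sumr_ge0 => i _; rewrite mulr_ge0 //; case: hw.
Qed.

Lemma ler_bary (w : rv) F G : simplex w ->
  F 0%N <= G 0%N -> (forall i : 'I_n, F i.+1 <= G i.+1) -> bary w F <= bary w G.
Proof.
move=> hw FG0 FGS; rewrite -subr_ge0 -baryB bary_ge0 ?subr_ge0 // => i.
by rewrite subr_ge0.
Qed.

Lemma simplex_convex_comb (u v : rv) t :
  simplex u -> simplex v -> 0 <= t <= 1 -> simplex (t *: u + (1 - t) *: v).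
Proof.
move=> [u_ge0 u_le1] [v_ge0 v_le1] /andP[t_ge0 t_le1]; split.
  by move=> i; rewrite !mxE addr_ge0 ?mulr_ge0 // subr_ge0.
have -> : \sum_(i < n) (t *: u + (1 - t) *: v) 0 i =
          t * \sum_(i < n) u 0 i + (1 - t) * \sum_(i < n) v 0 i.
  by rewrite !mulr_sumr -big_split; apply: eq_bigr => i _; rewrite !mxE.
have := ler_wpM2l t_ge0 u_le1.
have /ler_wpM2l/(_ _ _ v_le1) : 0 <= 1 - t by rewrite subr_ge0.
by rewrite !mulr1; lra.
Qed.

(* The polar form of the Bernstein polynomial with coefficients [b], computed by
   de Casteljau's recursion: [blossom b (nseq k w) = bpoly k b w] (see
   [bpoly_blossom]), and [blossom b s] is symmetric and affine in each entry. *)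
Fixpoint blossom (b : mi -> R) (s : seq rv) : R :=
  if s is w :: s' then bary w (fun x => blossom (fun a => b (addv x a)) s')
  else b (mzero d).

Lemma eq_blossom s b1 b2 : b1 =1 b2 -> blossom b1 s = blossom b2 s.
Proof.
elim: s b1 b2 => [|w s IHs] b1 b2 eq_b /=; first exact: eq_b.
by apply: eq_bary => [|i]; apply: IHs => a; apply: eq_b.
Qed.

Lemma eq_in_blossom s b1 b2 :
  (forall a, inGamma (size s) a -> b1 a = b2 a) -> blossom b1 s = blossom b2 s.
Proof.
elim: s b1 b2 => [|w s IHs] b1 b2 eq_b /=.
  by apply: eq_b; rewrite /inGamma msum_mzero.
apply: eq_bary => [|i]; apply: IHs => a a_in; apply: eq_b.
  exact: inGamma_addv0.
exact: inGamma_addvS.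
Qed.

Lemma blossom_cst s c : blossom (fun _ => c) s = c.
Proof.
elim: s c => [|w s IHs] c //=.
by rewrite (eq_bary w (G := fun _ => c)) ?bary_cst // => [|i]; rewrite IHs.
Qed.

Lemma blossomD s b1 b2 :
  blossom (fun a => b1 a + b2 a) s = blossom b1 s + blossom b2 s.
Proof.
elim: s b1 b2 => [|w s IHs] b1 b2 //=.
by rewrite -baryD; apply: eq_bary => [|i]; exact: IHs.
Qed.

Lemma blossomZ s c b : blossom (fun a => c * b a) s = c * blossom b s.
Proof.
elim: s b => [|w s IHs] b //=.
by rewrite -baryZ; apply: eq_bary => [|i]; exact: IHs.
Qed.

Lemma blossomB s b1 b2 :
  blossom (fun a => b1 a - b2 a) s = blossom b1 s - blossom b2 s.
Proof.
rewrite -mulN1r -blossomZ -blossomD; apply: eq_blossom => a.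
by rewrite mulN1r.
Qed.

Lemma blossom_sum s I (r : seq I) (P : pred I) (F : I -> mi -> R) :
  blossom (fun a => \sum_(j <- r | P j) F j a) s = \sum_(j <- r | P j) blossom (F j) s.
Proof.
elim: r => [|j r IHr].
  by rewrite big_nil (eq_blossom _ (b2 := fun _ => 0)) ?blossom_cst // => a; rewrite big_nil.
rewrite big_cons; case: ifP => Pj; rewrite -IHr; last first.
  by apply: eq_blossom => a; rewrite big_cons Pj.
by rewrite -blossomD; apply: eq_blossom => a; rewrite big_cons Pj.
Qed.

Lemma blossom_ge0 s b : {in s, forall w, simplex w} ->
  (forall a, inGamma (size s) a -> 0 <= b a) -> 0 <= blossom b s.
Proof.
elim: s b => [|w s IHs] b s_simplex b_ge0 /=.
  by apply: b_ge0; rewrite /inGamma msum_mzero.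
have s'_simplex : {in s, forall w', simplex w'}.
  by move=> w' w'_in; apply: s_simplex; rewrite inE w'_in orbT.
apply: bary_ge0 => [||i]; first by apply: s_simplex; rewrite inE eqxx.
  by apply: IHs => // a a_in; apply: b_ge0; exact: inGamma_addv0.
by apply: IHs => // a a_in; apply: b_ge0; exact: inGamma_addvS.
Qed.

Lemma ler_blossom s b1 b2 : {in s, forall w, simplex w} ->
  (forall a, inGamma (size s) a -> b1 a <= b2 a) -> blossom b1 s <= blossom b2 s.
Proof.
move=> s_simplex le_b; rewrite -subr_ge0 -blossomB; apply: blossom_ge0 => // a a_in.
by rewrite subr_ge0 le_b.
Qed.

Lemma blossom_swap b x y s : blossom b (y :: x :: s) = blossom b (x :: y :: s).
Proof.
rewrite /= bary_swap; apply: eq_bary => [|i]; apply: eq_bary => [|j];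
  by apply: eq_blossom => a; congr b; exact: addvC.
Qed.

Lemma blossom_cat_cons s1 b x s2 :
  blossom b (s1 ++ x :: s2) = blossom b (x :: s1 ++ s2).
Proof.
elim: s1 b => [|y s1 IHs] b //=.
transitivity (blossom b (y :: x :: s1 ++ s2)); last exact: blossom_swap.
by apply: eq_bary => [|i]; rewrite IHs.
Qed.

Lemma blossom_convex_comb b (u v : rv) t s :
  blossom b ((t *: u + (1 - t) *: v) :: s) =
  t * blossom b (u :: s) + (1 - t) * blossom b (v :: s).
Proof. exact: bary_convex_comb. Qed.

(** * Convexity *)

Section ConvexSequence.
Variables (c : nat -> R) (k : nat).
Hypothesis c_convex : forall j, (j.+2 <= k)%N -> 0 <= c j.+2 - 2 * c j.+1 + c j.

Let incr i := c i.+1 - c i.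

Let incr_mono i j : (i <= j)%N -> (j < k)%N -> incr i <= incr j.
Proof.
elim: j => [|j IHj]; first by rewrite leqn0 => /eqP->.
rewrite leq_eqVlt => /orP[/eqP->//|]; rewrite ltnS => le_ij lt_jk.
apply: le_trans (IHj le_ij (ltnW lt_jk)) _.
by have := c_convex lt_jk; rewrite /incr; lra.
Qed.

Let sum_incr_const m p j : (m <= p)%N -> (p <= k)%N ->
  (forall i, (m <= i < p)%N -> incr j <= incr i) ->
  (p - m)%:R * incr j <= c p - c m.
Proof.
move=> le_mp le_pk le_incr; rewrite -(telescope_sumr c le_mp) mulr_natl -sumr_const_nat.
rewrite big_nat_cond [X in _ <= X]big_nat_cond.
by apply: ler_sum => i /andP[/le_incr].
Qed.

Lemma convex_seq_tangent : k%:R * (c 1 - c 0) <= c k - c 0.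
Proof.
rewrite -[k in k%:R]subn0; apply: sum_incr_const => // i /andP[_ lt_ik].
exact: incr_mono.
Qed.

Lemma convex_seq_chord j : (j <= k)%N -> k%:R * c j <= j%:R * c k + (k - j)%:R * c 0.
Proof.
rewrite leq_eqVlt => /orP[/eqP->|lt_jk]; first by rewrite subnn mul0r addr0.
have le_jk := ltnW lt_jk.
have head : c j - c 0 <= j%:R * incr j.
  rewrite -(telescope_sumr c (leq0n j)) -[j in j%:R]subn0 mulr_natl -sumr_const_nat.
  rewrite big_nat_cond [X in _ <= X]big_nat_cond.
  by apply: ler_sum => i /andP[/andP[_ lt_ij] _]; apply: incr_mono => //; apply: ltnW.
have tail : (k - j)%:R * incr j <= c k - c j.
  by apply: sum_incr_const => // i /andP[le_ji lt_ik]; exact: incr_mono.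
have k_split : k%:R = j%:R + (k - j)%:R :> R by rewrite -natrD subnKC.
have h1 : 0 <= (k - j)%:R * (j%:R * incr j - (c j - c 0)) :> R.
  by rewrite mulr_ge0 ?subr_ge0.
have h2 : 0 <= j%:R * (c k - c j - (k - j)%:R * incr j) :> R.
  by rewrite mulr_ge0 ?subr_ge0.
by rewrite k_split; nra.
Qed.

End ConvexSequence.

Lemma diag_dominant_quad_ge0 (I : finType) (H : I -> I -> R) (x : I -> R) :
  (forall i j, H i j = H j i) ->
  (forall i, 0 <= H i i - \sum_(j | j != i) `|H i j|) ->
  0 <= \sum_i \sum_j x i * x j * H i j.
Proof.
move=> H_sym H_dom.
set A := \sum_i \sum_(j | j != i) `|H i j| * x i ^+ 2.
have A_sym : \sum_i \sum_(j | j != i) `|H i j| * x j ^+ 2 = A.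
  rewrite (eq_bigr (fun i => \sum_j if j != i then `|H i j| * x j ^+ 2 else 0)).
    rewrite exchange_big /=; apply: eq_bigr => j _; rewrite [RHS]big_mkcond /=.
    by apply: eq_bigr => i _; rewrite eq_sym H_sym.
  by move=> i _; rewrite big_mkcond.
have amgm i j : - (`|H i j| * x i ^+ 2 + `|H i j| * x j ^+ 2) <= 2 * (x i * x j * H i j).
  have : 0 <= `|H i j| * (`|x i| - `|x j|) ^+ 2 by rewrite mulr_ge0 ?sqr_ge0.
  have : - `|x i * x j * H i j| <= x i * x j * H i j by rewrite lerNnormlW.
  rewrite !normrM -[x i ^+ 2]real_normK ?num_real // -[x j ^+ 2]real_normK ?num_real //.
  by have := normr_ge0 (H i j); nra.
have diag_ge0 : 0 <= \sum_i x i ^+ 2 * H i i - A.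
  rewrite -sumrB sumr_ge0 // => i _.
  by rewrite -mulr_suml mulrC -mulrBl mulr_ge0 ?sqr_ge0.
have row i : 2 * (x i ^+ 2 * H i i)
    - (\sum_(j | j != i) `|H i j| * x i ^+ 2 + \sum_(j | j != i) `|H i j| * x j ^+ 2)
    <= 2 * \sum_j x i * x j * H i j.
  rewrite [X in _ <= 2 * X](bigD1 i) //= mulrDr -expr2 lerD2l -big_split -sumrN mulr_sumr.
  by apply: ler_sum => j _; exact: amgm.
have := ler_sum (index_enum I) (P := xpredT) (fun i _ => row i).
rewrite sumrB big_split /= A_sym -!mulr_sumr -/A.
by lra.
Qed.

Definition bilin (h : 'I_n -> 'I_n -> R) (x y : rv) : R :=
  \sum_(i < n) x 0 i * \sum_(j < n) y 0 j * h i j.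

Lemma bary2_expand (x y : rv) (G : nat -> nat -> R) :
  bary x (fun p => bary y (G p)) =
  G 0%N 0%N + \sum_(j < n) y 0 j * (G 0%N j.+1 - G 0%N 0%N)
  + \sum_(i < n) x 0 i * (G i.+1 0%N - G 0%N 0%N)
  + bilin (fun i j => G i.+1 j.+1 - G i.+1 0%N - G 0%N j.+1 + G 0%N 0%N) x y.
Proof.
rewrite bary_affine (bary_affine y (G 0%N)) -!addrA; congr (_ + (_ + _)).
rewrite /bilin -big_split /=; apply: eq_bigr => i _; rewrite -mulrDr; congr (_ * _).
rewrite !bary_affine.
have -> : \sum_(j < n) y 0 j * (G i.+1 j.+1 - G i.+1 0%N - G 0%N j.+1 + G 0%N 0%N) =
    \sum_(j < n) y 0 j * (G i.+1 j.+1 - G i.+1 0%N) - \sum_(j < n) y 0 j * (G 0%N j.+1 - G 0%N 0%N).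
  by rewrite -sumrB; apply: eq_bigr => j _; ring.
ring.
Qed.

Lemma bilin_sqr_diff h (u v : rv) :
  \sum_(i < n) \sum_(j < n) (u 0 i - v 0 i) * (u 0 j - v 0 j) * h i j =
  bilin h u u - bilin h u v - bilin h v u + bilin h v v.
Proof.
rewrite /bilin -!sumrB -big_split /=; apply: eq_bigr => i _.
by rewrite !mulr_sumr -!sumrB -big_split /=; apply: eq_bigr => j _; ring.
Qed.

Lemma D2_sym (b : mi -> R) (i j : 'I_n) a : D2 b i.+1 j.+1 0 a = D2 b j.+1 i.+1 0 a.
Proof. by rewrite /D2 /D1 !addv0 addvC; ring. Qed.

Lemma blossom_second_diff b (u v : rv) r :
  blossom b (u :: u :: r) - 2 * blossom b (u :: v :: r) + blossom b (v :: v :: r) =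
  blossom (fun a => \sum_(i < n) \sum_(j < n)
                      (u 0 i - v 0 i) * (u 0 j - v 0 j) * D2 b i.+1 j.+1 0 a) r.
Proof.
set G := fun p q => blossom (fun a => b (addv p (addv q a))) r.
have blossom2 x y : blossom b (x :: y :: r) = bary x (fun p => bary y (G p)) by [].
have hessian i j : G i.+1 j.+1 - G i.+1 0%N - G 0%N j.+1 + G 0%N 0%N =
                   blossom (D2 b i.+1 j.+1 0) r.
  rewrite /G -!blossomB -blossomD; apply: eq_blossom => a.
  by rewrite /D2 /D1 !addv0 addvC; ring.
rewrite blossom_sum; under eq_bigr do rewrite blossom_sum.
under eq_bigr do under eq_bigr do rewrite blossomZ -hessian.
have -> : 2 * blossom b (u :: v :: r) = blossom b (u :: v :: r) + blossom b (v :: u :: r).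
  by rewrite (blossom_swap b u v); ring.
by rewrite bilin_sqr_diff !blossom2 !bary2_expand; ring.
Qed.

Definition diag_dominant (k : nat) (b : mi -> R) : Prop :=
  forall a : mi, inGamma (k - 2) a -> forall i : 'I_n,
    D2 b i.+1 i.+1 0 a - \sum_(j < n | j != i) `| D2 b i.+1 j.+1 0 a | >= 0.

Definition bchain (b : mi -> R) k (u v : rv) j := blossom b (nseq j u ++ nseq (k - j) v).

Lemma bchain_convex b k (u v : rv) : diag_dominant k b -> simplex u -> simplex v ->
  forall j, (j.+2 <= k)%N ->
  0 <= bchain b k u v j.+2 - 2 * bchain b k u v j.+1 + bchain b k u v j.
Proof.
move=> b_dom u_simplex v_simplex j lt_jk.
set r := nseq j u ++ nseq (k - j.+2) v.
have -> : bchain b k u v j.+2 = blossom b (u :: u :: r) by [].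
have -> : bchain b k u v j.+1 = blossom b (u :: v :: r).
  rewrite /bchain (_ : (k - j.+1 = (k - j.+2).+1)%N); last by lia.
  by rewrite -blossom_swap -(blossom_cat_cons (u :: nseq j u)).
have -> : bchain b k u v j = blossom b (v :: v :: r).
  rewrite /bchain (_ : (k - j = (k - j.+2).+2)%N); last by lia.
  by rewrite blossom_cat_cons (blossom_cat_cons (v :: nseq j u)).
rewrite blossom_second_diff; apply: blossom_ge0.
  by move=> w; rewrite mem_cat !mem_nseq => /orP[]/andP[_ /eqP->].
move=> a a_in; apply: diag_dominant_quad_ge0 => [i l|i]; first exact: D2_sym.
apply: b_dom; move: a_in.
by rewrite /r size_cat !size_nseq (_ : (j + (k - j.+2) = k - 2)%N) //; lia.
Qed.

Section Convexity.
Variables (b : mi -> R) (k : nat).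
Hypotheses (k_ge2 : (2 <= k)%N) (b_dom : diag_dominant k b).

(* Induction on the number [m] of copies of [t u + (1 - t) v], expanded one at a
   time by affinity; for [m = 0] this is the chord inequality for [bchain]. *)
Lemma blossom_mixed_le (u v : rv) t : simplex u -> simplex v -> 0 <= t <= 1 ->
  forall m a, (m + a <= k)%N ->
  k%:R * blossom b (nseq m (t *: u + (1 - t) *: v) ++ nseq a u ++ nseq (k - m - a) v)
  <= k%:R * bchain b k u v 0 + (a%:R + m%:R * t) * (bchain b k u v k - bchain b k u v 0).
Proof.
move=> u_simplex v_simplex /andP[t_ge0 t_le1].
set z := t *: u + (1 - t) *: v.
have chain_convex := bchain_convex b_dom u_simplex v_simplex.
elim=> [|m IHm] a le_mak.
  rewrite /= subn0 mul0r addr0.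
  rewrite add0n in le_mak; apply: le_trans (convex_seq_chord chain_convex le_mak) _.
  by rewrite /bchain natrB //; lra.
have eq_u : blossom b (u :: nseq m z ++ nseq a u ++ nseq (k - m.+1 - a) v) =
            blossom b (nseq m z ++ nseq a.+1 u ++ nseq (k - m - a.+1) v).
  by rewrite (_ : (k - m.+1 - a = k - m - a.+1)%N) -?blossom_cat_cons //; lia.
have eq_v : blossom b (v :: nseq m z ++ nseq a u ++ nseq (k - m.+1 - a) v) =
            blossom b (nseq m z ++ nseq a u ++ nseq (k - m - a) v).
  rewrite (_ : (k - m - a = (k - m.+1 - a).+1)%N); last by lia.
  by rewrite catA -blossom_cat_cons -catA.
have IHu : k%:R * blossom b (u :: nseq m z ++ nseq a u ++ nseq (k - m.+1 - a) v) <=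
    k%:R * bchain b k u v 0 + (a.+1%:R + m%:R * t) * (bchain b k u v k - bchain b k u v 0).
  by rewrite eq_u IHm //; lia.
have IHv : k%:R * blossom b (v :: nseq m z ++ nseq a u ++ nseq (k - m.+1 - a) v) <=
    k%:R * bchain b k u v 0 + (a%:R + m%:R * t) * (bchain b k u v k - bchain b k u v 0).
  by rewrite eq_v IHm //; lia.
have t'_ge0 : 0 <= 1 - t by rewrite subr_ge0.
have := ler_wpM2l t_ge0 IHu; have := ler_wpM2l t'_ge0 IHv.
rewrite -[nseq m.+1 z ++ _]cat_cons blossom_convex_comb -!natr1.
by nra.
Qed.

Lemma blossom_nseq_convex (u v : rv) t : simplex u -> simplex v -> 0 <= t <= 1 ->
  blossom b (nseq k (t *: u + (1 - t) *: v)) <=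
  t * blossom b (nseq k u) + (1 - t) * blossom b (nseq k v).
Proof.
move=> u_simplex v_simplex t01.
have le_k0 : (k + 0 <= k)%N by rewrite addn0.
have := blossom_mixed_le u_simplex v_simplex t01 le_k0.
rewrite subnn /= !cats0 /bchain subnn subn0 cats0 add0r => le_k.
have k_gt0 : 0 < k%:R :> R by rewrite ltr0n; lia.
by rewrite -(ler_pM2l k_gt0); apply: le_trans le_k _; lra.
Qed.

End Convexity.

(** * Lower bounds *)

Lemma wlast0 : wlast 0 = 1.
Proof. by rewrite /wlast big1 ?subr0 // => i _; rewrite mxE. Qed.

Lemma sum_delta (i : 'I_n) (F : 'I_n -> R) : \sum_(j < n) (j == i)%:R * F j = F i.
Proof. by rewrite (bigD1 i) //= eqxx mul1r big1 ?addr0 // => j /negbTE->; rewrite mul0r. Qed.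

Lemma wlast_delta i : wlast (delta_mx 0 i) = 0.
Proof.
rewrite /wlast (eq_bigr (fun j => (j == i)%:R * 1)) ?sum_delta ?subrr //.
by move=> j _; rewrite mxE mulr1.
Qed.

Lemma simplex0 : simplex 0.
Proof. by split=> [i|]; rewrite ?mxE // -subr_ge0 -/(wlast 0) wlast0. Qed.

Lemma simplex_delta i : simplex (delta_mx 0 i).
Proof. by split=> [j|]; rewrite ?mxE ?ler0n // -subr_ge0 -/(wlast _) wlast_delta. Qed.

Lemma bary0 F : bary 0 F = F 0%N.
Proof. by rewrite /bary wlast0 mul1r big1 ?addr0 // => i _; rewrite mxE mul0r. Qed.

Lemma bary_delta i F : bary (delta_mx 0 i) F = F i.+1.
Proof.
rewrite /bary wlast_delta mul0r add0r (eq_bigr (fun j => (j == i)%:R * F j.+1)) ?sum_delta //.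
by move=> j _; rewrite mxE.
Qed.

Lemma bary_indicator0 w : bary w (fun x => (x == 0%N)%:R) = wlast w.
Proof. by rewrite /bary eqxx mulr1 big1 ?addr0 // => i _; rewrite mulr0. Qed.

Lemma bary_indicatorS w (i : 'I_n) : bary w (fun x => (x == i.+1)%:R) = w 0 i.
Proof.
rewrite /bary mulr0 add0r (eq_bigr (fun j => (j == i)%:R * w 0 j)) ?sum_delta //.
by move=> j _; rewrite eqSS mulrC.
Qed.

Lemma mscale0 (i : 'I_n) : mscale 0 i = mzero d.
Proof. by apply/ffunP=> l; rewrite !ffunE; case: ifP. Qed.

Lemma addv_mscale (i : 'I_n) m : addv i.+1 (mscale m i) = mscale m.+1 i.
Proof. by apply/ffunP=> l; rewrite addvE !ffunE; case: (l == i); rewrite ?addn1 ?addn0. Qed.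

Lemma addv_mzero (i : 'I_n) : addv i.+1 (mzero d) = mscale 1 i.
Proof. by rewrite -(mscale0 i) addv_mscale. Qed.

Lemma addv_mscale_neq (i j : 'I_n) m : j != i -> addv j.+1 (mscale m i) = mpair m i 1 j.
Proof.
move=> ne; apply/ffunP=> l; rewrite addvE !ffunE.
by case: (eqVneq l i) => _ /=; case: (l == j).
Qed.

Lemma blossom_nseq0 g m : blossom g (nseq m 0) = g (mzero d).
Proof. by elim: m g => [|m IHm] g //=; rewrite bary0 IHm addv0. Qed.

Lemma blossom_nseq_delta g (i : 'I_n) m :
  blossom g (nseq m (delta_mx 0 i)) = g (mscale m i).
Proof.
elim: m g => [|m IHm] g /=; first by rewrite mscale0.
by rewrite bary_delta IHm addv_mscale.
Qed.

Section LowerBounds.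
Variables (b : mi -> R) (k : nat).
Hypotheses (k_ge2 : (2 <= k)%N) (b_dom : diag_dominant k b).
Let k_neq0 : k%:R != 0 :> R. Proof. by rewrite pnatr_eq0; lia. Qed.

Lemma blossom_tangent (w v : rv) : simplex w -> simplex v ->
  bchain b k w v 0 + k%:R * (bchain b k w v 1 - bchain b k w v 0) <= blossom b (nseq k w).
Proof.
move=> w_simplex v_simplex.
have := convex_seq_tangent (bchain_convex b_dom w_simplex v_simplex).
by rewrite /bchain subnn cats0; lra.
Qed.

(* Tangent at [w] in the direction of the vertex [0]; (R3) bounds its slope. *)
Lemma wlast_le_blossom (w : rv) : b (mzero d) = 1 ->
  (forall i, 1 - k%:R^-1 <= b (mscale 1 i)) ->
  simplex w -> wlast w <= blossom b (nseq k w).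
Proof.
move=> b0 b_e w_simplex; apply: le_trans (blossom_tangent w_simplex simplex0).
rewrite /bchain subn0 /= blossom_nseq0 b0.
rewrite (eq_bary _ (G := fun x => b (addv x (mzero d)))) => [|*|*]; rewrite ?blossom_nseq0 //.
have : bary w (fun x => - k%:R^-1 * (1 - (x == 0%N)%:R)) <=
       bary w (fun x => b (addv x (mzero d)) - 1).
  apply: ler_bary => // [|i]; first by rewrite addv0 b0 !subrr mulr0.
  by rewrite addv_mzero subr0 mulr1; have := b_e i; lra.
rewrite baryZ !baryB !bary_cst bary_indicator0 => /(ler_wpM2l (ler0n R k)).
by rewrite mulrA mulrN (mulfV k_neq0) mulN1r; lra.
Qed.

Lemma coord_le_blossom (w : rv) (i : 'I_n) : b (mscale k i) = 1 ->
  1 - k%:R^-1 <= b (mscale k.-1 i) ->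
  (forall j, i != j -> 1 - k%:R^-1 <= b (mpair k.-1 i 1 j)) ->
  simplex w -> w 0 i <= blossom b (nseq k w).
Proof.
move=> b_ke b_k1e b_k1e1 w_simplex.
apply: le_trans (blossom_tangent w_simplex (simplex_delta i)).
rewrite /bchain subn0 /= blossom_nseq_delta b_ke.
rewrite (eq_bary _ (G := fun x => b (addv x (mscale k.-1 i)))) => [|*|*];
  rewrite ?blossom_nseq_delta ?subn1 //.
have : bary w (fun x => - k%:R^-1 * (1 - (x == i.+1)%:R)) <=
       bary w (fun x => b (addv x (mscale k.-1 i)) - 1).
  apply: ler_bary => // [|j]; first by rewrite addv0 subr0 mulr1; lra.
  have [->|ne] := eqVneq j i.
    by rewrite addv_mscale prednK ?b_ke ?eqxx ?subrr ?mulr0 //; lia.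
  rewrite addv_mscale_neq // eqSS (_ : (j == i :> nat) = false) ?subr0 ?mulr1; last exact/negbTE.
  by have := b_k1e1 j; rewrite eq_sym ne => /(_ isT); lra.
rewrite baryZ !baryB !bary_cst bary_indicatorS => /(ler_wpM2l (ler0n R k)).
by rewrite mulrA mulrN (mulfV k_neq0) mulN1r; lra.
Qed.

End LowerBounds.

(** * Degree elevation *)

(* Up to the factor [1 / m], the coefficients of a Bernstein polynomial of
   degree [m - 1] rewritten in degree [m]. *)
Definition elev (m : nat) (b : mi -> R) (a : mi) : R :=
  (m - msum a)%:R * b a + \sum_(l < n) (a l)%:R * b (subv l a).

Lemma eq_elev m b1 b2 a : b1 =1 b2 -> elev m b1 a = elev m b2 a.
Proof. by move=> eq_b; rewrite /elev eq_b; congr (_ + _); apply: eq_bigr => l _; rewrite eq_b. Qed.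

Lemma elevS0 m b a : (msum a <= m)%N -> elev m.+1 b a = b a + elev m b a.
Proof. by move=> le_am; rewrite /elev subSn // -nat1r; ring. Qed.

Lemma elevSS m b (i : 'I_n) a : (msum a <= m)%N ->
  elev m.+1 b (addv i.+1 a) = b a + elev m (fun c => b (addv i.+1 c)) a.
Proof.
move=> le_am; rewrite /elev msum_addv subSS addrA [b a + _]addrC -addrA; congr (_ + _).
rewrite (bigD1 i) //= [in RHS](bigD1 i) //= addvE eqxx addvK addrA; congr (_ + _).
  rewrite natrD mulrDl mul1r addrC; congr (_ + _).
  by case: (posnP (a i)) => [->|a_gt0]; rewrite ?mul0r ?subvK.
by apply: eq_bigr => l ne; rewrite addvE (negbTE ne) addn0 subv_addvC.
Qed.

Lemma elevB m f g a : elev m (fun c => f c - g c) a = elev m f a - elev m g a.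
Proof.
rewrite /elev (eq_bigr (fun l => (a l)%:R * f (subv l a) - (a l)%:R * g (subv l a))).
  by rewrite sumrB; ring.
by move=> l _; rewrite mulrBr.
Qed.

Lemma elev_sum m (i : 'I_n) (F : 'I_n -> mi -> R) a :
  elev m (fun c => \sum_(j < n | j != i) F j c) a = \sum_(j < n | j != i) elev m (F j) a.
Proof.
rewrite /elev mulr_sumr big_split /=; congr (_ + _).
by rewrite exchange_big /=; apply: eq_bigr => l _; rewrite mulr_sumr.
Qed.

Lemma elev_D2 m b (i j : 'I_n) a : (msum a <= m)%N ->
  D2 (elev m.+2 b) i.+1 j.+1 0 a = elev m (D2 b i.+1 j.+1 0) a.
Proof.
move=> le_am; have le_iam : (msum (addv i.+1 a) <= m.+1)%N by rewrite msum_addv.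
rewrite /D2 /D1 !addv0 (elevSS b j le_iam) (elevSS (fun c => b (addv j.+1 c)) i le_am).
rewrite (elevSS b i (leqW le_am)) (elevS0 (fun c => b (addv i.+1 c)) le_am).
rewrite (elevSS b j (leqW le_am)) (elevS0 (fun c => b (addv j.+1 c)) le_am).
rewrite (elevS0 b (leqW le_am)) (elevS0 b le_am).
rewrite (eq_elev m (b1 := D2 b i.+1 j.+1 0)
  (b2 := fun c => (b (addv j.+1 (addv i.+1 c)) - b (addv i.+1 c)) - (b (addv j.+1 c) - b c))).
  by rewrite !elevB; ring.
by move=> c; rewrite /D2 /D1 !addv0.
Qed.

Lemma elev_ge0 m g a : (msum a <= m)%N ->
  (forall c, (msum c <= m.-1)%N -> 0 <= g c) -> 0 <= elev m g a.
Proof.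
move=> le_am g_ge0; rewrite /elev addr_ge0 //.
  have [le_ma|lt_am] := leqP m (msum a).
    by rewrite (eqP (_ : m - msum a == 0)%N) ?mul0r // subn_eq0.
  by rewrite mulr_ge0 // g_ge0 //; lia.
apply: sumr_ge0 => l _; case: (posnP (a l)) => [->|a_gt0]; first by rewrite mul0r.
by rewrite mulr_ge0 // g_ge0 // msum_subv //; lia.
Qed.

Lemma ler_norm_elev m g a : `| elev m g a | <= elev m (fun c => `|g c|) a.
Proof.
rewrite /elev; apply: le_trans (ler_normD _ _) _; apply: lerD.
  by rewrite normrM ger0_norm.
apply: le_trans (ler_norm_sum _ _ _) _; apply: ler_sum => l _.
by rewrite normrM ger0_norm.
Qed.

Lemma elev_cst m c a : (msum a <= m)%N -> elev m (fun _ => c) a = m%:R * c.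
Proof. by move=> le_am; rewrite /elev -big_distrl -mulrDl -natr_sum -natrD subnK. Qed.

Lemma blossom_elev m (w : rv) b :
  blossom (elev m b) (nseq m w) = m%:R * blossom b (nseq m.-1 w).
Proof.
elim: m b => [|m IHm] b.
  by rewrite /= /elev mul0r big1 ?addr0 ?mul0r // => l _; rewrite ffunE mul0r.
rewrite [LHS]/= (eq_bary w (G := fun x =>
  blossom b (nseq m w) + m%:R * blossom (fun a => b (addv x a)) (nseq m.-1 w))).
- rewrite baryD bary_cst baryZ -nat1r mulrDl mul1r; congr (_ + _).
  by case: m {IHm} => [|m]; rewrite ?mul0r.
- rewrite (eq_in_blossom (b2 := fun a => b a + elev m b a)) => [|a].
    by rewrite blossomD IHm; congr (_ + _ * _); apply: eq_blossom => a; rewrite addv0.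
  by rewrite size_nseq addv0 => /elevS0.
- move=> i; rewrite (eq_in_blossom (b2 := fun a => b a + elev m (fun c => b (addv i.+1 c)) a)).
    by rewrite blossomD IHm.
  by move=> a; rewrite size_nseq => /elevSS.
Qed.

Lemma msum_mscale c (i : 'I_n) : msum (mscale c i) = c.
Proof.
by rewrite /msum (bigD1 i) //= ffunE eqxx big1 ?addn0 // => l ne; rewrite ffunE (negbTE ne).
Qed.

Lemma sum_mscale c (i : 'I_n) (g : 'I_n -> R) :
  \sum_(l < n) ((mscale c i) l)%:R * g l = c%:R * g i.
Proof.
rewrite (bigD1 i) //= ffunE eqxx big1 ?addr0 // => l ne.
by rewrite ffunE (negbTE ne) mul0r.
Qed.

Lemma msum_mpair c c' (i j : 'I_n) : i != j -> msum (mpair c i c' j) = (c + c')%N.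
Proof.
move=> ne; rewrite /msum (bigD1 i) //= (bigD1 j) 1?eq_sym //= !ffunE eqxx (negbTE ne).
rewrite eq_sym (negbTE ne) eqxx big1 ?addn0 //= => l /andP[ne_li ne_lj].
by rewrite ffunE (negbTE ne_li) (negbTE ne_lj).
Qed.

Lemma sum_mpair c c' (i j : 'I_n) (g : 'I_n -> R) : i != j ->
  \sum_(l < n) ((mpair c i c' j) l)%:R * g l = c%:R * g i + c'%:R * g j.
Proof.
move=> ne; rewrite (bigD1 i) //= (bigD1 j) 1?eq_sym //= !ffunE eqxx (negbTE ne).
rewrite eq_sym (negbTE ne) eqxx big1 ?addr0 ?addn0 ?add0n ?addrA // => l /andP[ne_li ne_lj].
by rewrite ffunE (negbTE ne_li) (negbTE ne_lj) mul0r.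
Qed.

Lemma subv_mscale c (i : 'I_n) : subv i (mscale c.+1 i) = mscale c i.
Proof. by apply/ffunP=> l; rewrite !ffunE; case: (l == i) => /=; lia. Qed.

Lemma subv_mpairl c c' (i j : 'I_n) : i != j -> subv i (mpair c.+1 i c' j) = mpair c i c' j.
Proof.
move=> ne; apply/ffunP=> l; rewrite !ffunE.
by case: (eqVneq l i) => [->|ne_li] /=; rewrite ?(negbTE ne) ?subn0 //= ?addn0 ?subn1.
Qed.

Lemma subv_mpairr c (i j : 'I_n) : i != j -> subv j (mpair c i 1 j) = mscale c i.
Proof.
move=> ne; apply/ffunP=> l; rewrite !ffunE.
case: (eqVneq l j) => [->|ne_lj] /=; first by rewrite eq_sym (negbTE ne).
by rewrite subn0; case: (l == i); rewrite addn0.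
Qed.

Lemma elev_bounded k b : (forall a, inGamma k a -> 0 <= b a <= 1) ->
  forall a, inGamma k.+1 a -> 0 <= k.+1%:R^-1 * elev k.+1 b a <= 1.
Proof.
move=> b01 a a_in; have k1_gt0 : 0 < k.+1%:R :> R by rewrite ltr0n.
apply/andP; split.
  by rewrite mulr_ge0 ?invr_ge0 ?ler0n // elev_ge0 // => c /b01/andP[].
rewrite ler_pdivrMl // mulr1 -subr_ge0 -[X in X - _]mulr1 -(elev_cst 1 a_in) -elevB.
by apply: elev_ge0 => // c /b01/andP[_]; rewrite subr_ge0.
Qed.

Lemma diag_dominantZ k c b : 0 <= c -> diag_dominant k b -> diag_dominant k (fun a => c * b a).
Proof.
move=> c_ge0 b_dom a a_in i; rewrite /D2 /D1.
under eq_bigr do rewrite -!mulrBr normrM ger0_norm //.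
by rewrite -mulr_sumr -!mulrBr mulr_ge0 // b_dom.
Qed.

Lemma elev_diag_dominant k b : diag_dominant k.+1 b -> diag_dominant k.+2 (elev k.+2 b).
Proof.
move=> b_dom a a_in i; have le_ak : (msum a <= k)%N by move: a_in; rewrite /inGamma; lia.
rewrite elev_D2 //; under eq_bigr do rewrite elev_D2 //.
apply: le_trans (_ : 0 <= elev k (D2 b i.+1 i.+1 0) a
                         - \sum_(j < n | j != i) elev k (fun c => `|D2 b i.+1 j.+1 0 c|) a) _.
  rewrite -elev_sum -elevB elev_ge0 // => c le_ck; apply: b_dom.
  by rewrite /inGamma; lia.
by rewrite lerD2l lerN2; apply: ler_sum => j _; apply: ler_norm_elev.
Qed.

Lemma mean_with_one_ge (K x : R) : 0 < K -> 1 - K^-1 <= x ->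
  1 - (K + 1)^-1 <= (K + 1)^-1 * (K * x + 1).
Proof.
move=> K_gt0 x_ge; have K1_neq0 : K + 1 != 0 by rewrite gt_eqF // ltr_wpDr.
have : 0 <= K * x - K + 1.
  have := ler_wpM2l (ltW K_gt0) x_ge.
  by rewrite mulrBr mulr1 mulfV ?gt_eqF //; lra.
have -> : (K + 1)^-1 * (K * x + 1) = 1 - (K + 1)^-1 + (K * x - K + 1) / (K + 1).
  by field.
by move=> ge0; rewrite lerDl divr_ge0 // ltW // ltr_wpDr.
Qed.

Lemma admissible_elev k b : (2 <= k)%N -> admissible k b ->
  admissible k.+1 (fun a => k.+1%:R^-1 * elev k.+1 b a).
Proof.
move=> k_ge2 [b01 [b_dom [b0 [b_ke [b_e [b_k1e b_k1e1]]]]]].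
have elev_dom : diag_dominant k.+1 (elev k.+1 b).
  by case: k k_ge2 b_dom {b01 b0 b_ke b_e b_k1e b_k1e1} => [|k] // _ /elev_diag_dominant.
have k1_neq0 : k.+1%:R != 0 :> R by rewrite pnatr_eq0.
have k_gt0 : 0 < k%:R :> R by rewrite ltr0n; lia.
have natrS : k.+1%:R = k%:R + 1 :> R by rewrite natr1.
have predS : k.-1.+1 = k by rewrite prednK //; lia.
split; [exact: elev_bounded|split; [|split; [|split; [|split; [|split]]]]].
- by apply: diag_dominantZ; rewrite // invr_ge0.
- rewrite /elev msum_mzero subn0 b0 big1 ?addr0 ?mulr1 ?mulVf // => l _.
  by rewrite ffunE mul0r.
- move=> i; rewrite /elev msum_mscale subnn mul0r add0r sum_mscale subv_mscale.
  by rewrite b_ke mulr1 mulVf.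
- move=> i; rewrite /elev msum_mscale sum_mscale subv_mscale mscale0 b0 subSS subn0 mulr1.
  by rewrite natrS mean_with_one_ge ?b_e.
- move=> i; rewrite /= /elev msum_mscale sum_mscale.
  have := subv_mscale k.-1 i; rewrite predS => ->.
  rewrite subSn // subnn b_ke mulr1 natrS [X in _ <= _ * X]addrC.
  by rewrite mean_with_one_ge ?b_k1e.
- move=> i j ne; rewrite /= /elev msum_mpair // addn1 subnn mul0r add0r sum_mpair //.
  have := @subv_mpairl k.-1 1 _ _ ne; rewrite predS => ->.
  rewrite subv_mpairr // b_ke mulr1 natrS.
  by rewrite mean_with_one_ge ?b_k1e1.
Qed.

(** * Bernstein polynomials and the blossom *)

Definition mfact (x : mi) : nat := (\prod_(i < n) (x i)`!)%N.
Definition mpow (x : mi) (w : rv) : R := \prod_(i < n) w 0 i ^+ x i.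

Lemma bernE m (x : mi) (w : rv) : bern m x w =
  (m`!)%:R / ((mfact x * (m - msum x)`!)%N)%:R * mpow x w * wlast w ^+ (m - msum x).
Proof. by []. Qed.

Lemma mfact_gt0 (x : mi) : (0 < mfact x)%N.
Proof. by apply: prodn_gt0 => i; apply: fact_gt0. Qed.

Lemma mfact_subv (x : mi) (i : 'I_n) : (0 < x i)%N -> mfact x = (x i * mfact (subv i x))%N.
Proof.
move=> x_gt0; rewrite /mfact (bigD1 i) //= [in RHS](bigD1 i) //= ffunE eqxx subn1.
rewrite -{1}(prednK x_gt0) factS prednK // -mulnA; congr (_ * (_ * _))%N.
by apply: eq_bigr => l ne; rewrite ffunE (negbTE ne) subn0.
Qed.

Lemma mpow_subv (x : mi) (w : rv) (i : 'I_n) : (0 < x i)%N -> mpow x w = w 0 i * mpow (subv i x) w.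
Proof.
move=> x_gt0; rewrite /mpow (bigD1 i) //= [in RHS](bigD1 i) //= ffunE eqxx subn1.
rewrite -{1}(prednK x_gt0) exprS -mulrA; congr (_ * (_ * _)).
by apply: eq_bigr => l ne; rewrite ffunE (negbTE ne) subn0.
Qed.

(* Each term is a multiple of [M], and the multipliers add up since
   [(k + 1 - |x|) + sum_i x_i = k + 1]. *)
Lemma bern_recS k (x : mi) (w : rv) : (msum x <= k.+1)%N ->
  bern k.+1 x w = (if (msum x <= k)%N then wlast w * bern k x w else 0) +
    \sum_(i < n) (if (0 < x i)%N then w 0 i * bern k (subv i x) w else 0).
Proof.
move=> le_xk; set s := msum x.
set M := mpow x w * wlast w ^+ (k.+1 - s) / ((mfact x * (k.+1 - s)`!)%N)%:R.
have mfact_neq0 : (mfact x)%:R != 0 :> R by rewrite pnatr_eq0 -lt0n mfact_gt0.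
have fact_neq0 m : (m`!)%:R != 0 :> R by rewrite pnatr_eq0 -lt0n fact_gt0.
have -> : bern k.+1 x w = (k.+1)`!%:R * M.
  by rewrite bernE /M -/s natrM; field; rewrite mfact_neq0 fact_neq0.
have -> : (if (s <= k)%N then wlast w * bern k x w else 0) = k`!%:R * (k.+1 - s)%:R * M.
  case: leqP => [le_sk|lt_ks]; last by rewrite (_ : k.+1 - s = 0)%N ?mulr0 ?mul0r //; lia.
  rewrite bernE /M -/s (_ : k.+1 - s = (k - s).+1)%N; last by lia.
  by rewrite factS exprS !natrM; field; rewrite fact_neq0 mfact_neq0 nat1r pnatr_eq0.
have coord i : (if (0 < x i)%N then w 0 i * bern k (subv i x) w else 0) = k`!%:R * (x i)%:R * M.
  case: (posnP (x i)) => [->|x_gt0]; first by rewrite mulr0 mul0r.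
  rewrite bernE msum_subv // -/s /M (mfact_subv x_gt0) (mpow_subv w x_gt0).
  rewrite (_ : k - s.-1 = k.+1 - s)%N; last by have := leq_msum x i; rewrite -/s; lia.
  by rewrite !natrM; field; rewrite fact_neq0 !pnatr_eq0 -!lt0n mfact_gt0 x_gt0.
rewrite (eq_bigr _ (fun i _ => coord i)) -mulr_suml -mulr_sumr -natr_sum -/(msum x) -/s.
have natr_split : (k.+1 - s)%:R + s%:R = k.+1%:R :> R by rewrite -natrD subnK.
by rewrite factS natrM -natr_split; ring.
Qed.

Definition midx_of_ord m (a : {ffun 'I_n -> 'I_m.+1}) : mi := [ffun i => nat_of_ord (a i)].

Definition gamma_seq m : seq mi :=
  [seq x <- map (@midx_of_ord m) (index_enum {ffun 'I_n -> 'I_m.+1}) | inGamma m x].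

Lemma midx_of_ord_inj m : injective (@midx_of_ord m).
Proof.
move=> a1 a2 eq_a; apply/ffunP=> i; apply: val_inj.
by have := congr1 (fun f : mi => f i) eq_a; rewrite !ffunE.
Qed.

Lemma gamma_seq_uniq m : uniq (gamma_seq m).
Proof. by rewrite filter_uniq // map_inj_uniq ?index_enum_uniq //; exact: midx_of_ord_inj. Qed.

Lemma mem_gamma_seq m x : (x \in gamma_seq m) = inGamma m x.
Proof.
rewrite mem_filter andb_idr // => x_in.
apply/mapP; exists [ffun i => inord (x i) : 'I_m.+1]; first exact: mem_index_enum.
by apply/ffunP=> i; rewrite !ffunE inordK // ltnS (leq_trans (leq_msum x i)).
Qed.

Lemma big_gamma_seq m (s : seq mi) (F : mi -> R) :
  uniq s -> (forall x, (x \in s) = inGamma m x) -> \sum_(x <- s) F x = \sum_(x <- gamma_seq m) F x.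
Proof.
move=> s_uniq mem_s; apply/perm_big/uniq_perm => //; first exact: gamma_seq_uniq.
by move=> x; rewrite mem_s mem_gamma_seq.
Qed.

Lemma bpoly_gamma_seq k b (w : rv) : bpoly k b w = \sum_(x <- gamma_seq k) b x * bern k x w.
Proof. by rewrite /bpoly big_filter big_map. Qed.

Lemma sum_gamma_seqS_wlast k b (w : rv) :
  \sum_(x <- gamma_seq k.+1) b x * (if (msum x <= k)%N then wlast w * bern k x w else 0) =
  wlast w * \sum_(x <- gamma_seq k) b (addv 0 x) * bern k x w.
Proof.
rewrite (eq_bigr (fun x => if inGamma k x then wlast w * (b x * bern k x w) else 0)); last first.
  by move=> x _; rewrite /inGamma; case: ifP; rewrite ?mulr0 // mulrCA.
rewrite -big_mkcond -big_filter -mulr_sumr; congr (_ * _).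
under [RHS]eq_bigr do rewrite addv0.
apply: big_gamma_seq; first by rewrite filter_uniq // gamma_seq_uniq.
by move=> x; rewrite mem_filter mem_gamma_seq andb_idr // /inGamma; apply: leqW.
Qed.

Lemma sum_gamma_seqS_coord k b (w : rv) (i : 'I_n) :
  \sum_(x <- gamma_seq k.+1) b x * (if (0 < x i)%N then w 0 i * bern k (subv i x) w else 0) =
  w 0 i * \sum_(x <- gamma_seq k) b (addv i.+1 x) * bern k x w.
Proof.
rewrite (eq_bigr (fun x : mi => if (0 < x i)%N then
    w 0 i * (b (addv i.+1 (subv i x)) * bern k (subv i x) w) else 0)); last first.
  by move=> x _; case: (posnP (x i)) => x_gt0; rewrite ?mulr0 // subvK // mulrCA.
rewrite -big_mkcond -big_filter -mulr_sumr; congr (_ * _).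
set F := [seq x <- gamma_seq k.+1 | (0 < (x : mi) i)%N].
rewrite -(big_map (subv i) xpredT (fun y => b (addv i.+1 y) * bern k y w)).
apply: big_gamma_seq.
  rewrite map_inj_in_uniq; first exact/filter_uniq/gamma_seq_uniq.
  move=> x1 x2.
  rewrite !mem_filter => /andP[x1_gt0 _] /andP[x2_gt0 _] eq_x.
  by rewrite -(subvK x1_gt0) eq_x subvK.
move=> y; apply/mapP/idP => [[x x_in ->]|y_in].
  move: x_in; rewrite mem_filter mem_gamma_seq => /andP[x_gt0].
  by rewrite /inGamma msum_subv //; lia.
exists (addv i.+1 y); last by rewrite addvK.
by rewrite mem_filter mem_gamma_seq addvE eqxx addn1 /= /inGamma msum_addv.
Qed.

Lemma bpoly_blossom k b (w : rv) : bpoly k b w = blossom b (nseq k w).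
Proof.
rewrite bpoly_gamma_seq; elim: k b => [|k IHk] b.
  rewrite -(big_gamma_seq _ (s := [:: mzero d])) // => [|x]; last first.
    rewrite inE /inGamma; apply/eqP/idP => [->|x0]; first by rewrite msum_mzero.
    by apply/ffunP=> i; rewrite ffunE; apply/eqP; rewrite -leqn0 (leq_trans (leq_msum x i)).
  rewrite big_seq1 bernE msum_mzero subnn.
  have -> : mfact (mzero d) = 1%N by rewrite /mfact big1 // => i _; rewrite ffunE.
  have -> : mpow (mzero d) w = 1 by rewrite /mpow big1 // => i _; rewrite ffunE.
  by rewrite fact0 muln1 divr1 expr0 !mulr1.
rewrite big_seq (eq_bigr (fun x =>
    b x * (if (msum x <= k)%N then wlast w * bern k x w else 0) +
    \sum_(i < n) b x * (if (0 < x i)%N then w 0 i * bern k (subv i x) w else 0))); last first.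
  by move=> x; rewrite mem_gamma_seq => x_in; rewrite bern_recS // mulrDr mulr_sumr.
rewrite -big_seq big_split /= exchange_big /= sum_gamma_seqS_wlast.
under [X in _ + X = _]eq_bigr do rewrite sum_gamma_seqS_coord.
by rewrite /=; congr (_ + _); [rewrite IHk|apply: eq_bigr => i _; rewrite IHk].
Qed.

Lemma inAk_inAkS k f : (2 <= k)%N -> @inAk R d k f -> @inAk R d k.+1 f.
Proof.
move=> k_ge2 [b [b_adm f_eq]]; exists (fun a => k.+1%:R^-1 * elev k.+1 b a).
split=> [|w w_simplex]; first exact: admissible_elev.
by rewrite f_eq // !bpoly_blossom blossomZ blossom_elev mulKf // pnatr_eq0.
Qed.

Lemma inAk_inA k f : (2 <= d)%N -> (2 <= k)%N -> @inAk R d k f -> @inA R d f.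
Proof.
move=> d_ge2 k_ge2 [b [[b01 [b_dom [b0 [b_ke [b_e [b_k1e b_k1e1]]]]]] f_eq]].
have f_blossom w : simplex w -> f w = blossom b (nseq k w).
  by move=> /f_eq->; rewrite bpoly_blossom.
split=> [u v u_simplex v_simplex t t01|w w_simplex].
  rewrite !f_blossom //; last exact: simplex_convex_comb.
  exact: blossom_nseq_convex.
rewrite f_blossom //.
have wlast_le := wlast_le_blossom k_ge2 b_dom b0 b_e w_simplex.
have coord_le i := coord_le_blossom k_ge2 b_dom (b_ke i) (b_k1e i) (b_k1e1 i) w_simplex.
have le1 : blossom b (nseq k w) <= 1.
  rewrite -(blossom_cst (nseq k w) 1); apply: ler_blossom => [w'|a].
    by rewrite mem_nseq => /andP[_ /eqP->].
  by rewrite size_nseq => /b01/andP[].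
by split; rewrite // le1 andbT; apply: inv_dim_le => //; lia.
Qed.

End BernsteinOnSimplex.

Unset Implicit Arguments.

Theorem mainTheorem6 (R : realFieldType) (d : nat) (hd : (2 <= d)%N)
  (k : nat) (hk : (2 <= k)%N) (f : 'rV[R]_(d.-1) -> R) :
  @inAk R d k f -> @inAk R d k.+1 f /\ @inA R d f.
Proof. by move=> f_in; split; [exact: inAk_inAkS hk f_in | exact: inAk_inA hd hk f_in]. Qed.
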